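(* $\ker\Lambda$ is the smallest ideal of $\mathcal H_{CK}$ which is stable under $B_+$ and contains $a\bowtie b-ab$ for all nonempty rooted trees $a,b$.
   Context: Let $k$ be a field of characteristic $0$. $\mathcal H_{CK}$ is the free commutative $k$-algebra on isomorphism classes of nonempty (non-planar, finite) rooted trees, i.e. rooted forests with unit the empty forest $\mathbf 1$; $B_+:\mathcal H_{CK}\to\mathcal H_{CK}$ is the linear map sending a forest $t_1\cdots t_n$ to the tree obtained by joining the roots of $t_1,\dots,t_n$ to a new root ($B_+(\mathbf 1)=\bullet$, the one-vertex tree). $\mathcal A=k[x]$ carries the quasi-shuffle product $\diamond$ determined by $\mathbf 1\diamond u=u\diamond\mathbf 1=u$ and $x^k\diamond x^l=(x^{k-1}\diamond x^l)x+(x^k\diamond x^{l-1})x+(x^{k-1}\diamond x^{l-1})x$ for $k,l\ge1$. $\Lambda:\mathcal H_{CK}\to(\mathcal A,\diamond)$ is the unique unital algebra morphism with $\Lambda(B_+(t_1\cdots t_n))=(\Lambda(t_1)\diamond\cdots\diamond\Lambda(t_n))x$. For trees $a=B_+(a_1\cdots a_n)$, $b=B_+(b_1\cdots b_p)$: $a\circ b=B_+(a_1\cdots a_nb)$, $a\times b=B_+(a_1\cdots a_nb_1\cdots b_p)$, $a\bowtie b=a\circ b+b\circ a+a\times b$; $ab$ is the product (forest) in $\mathcal H_{CK}$. *)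

From HB Require Import structures.
From mathcomp Require Import all_boot all_order all_algebra.
Set Implicit Arguments. Unset Strict Implicit. Unset Printing Implicit Defensive.
Import Order.TTheory GRing.Theory Num.Theory.
Local Open Scope ring_scope.

(* A (planar) rooted tree: a root together with the list of its subtrees.
   Every tree has at least one vertex (its root). *)
Inductive rtree := RNode of seq rtree.

Fixpoint rt_enc (t : rtree) : GenTree.tree unit :=
  let: RNode ts := t in GenTree.Node 0 (map rt_enc ts).

Fixpoint rt_dec (g : GenTree.tree unit) : rtree :=
  match g with
  | GenTree.Leaf _ => RNode [::]
  | GenTree.Node _ gs => RNode (map rt_dec gs)
  end.

Lemma rt_encK_aux : forall t, rt_dec (rt_enc t) = t.
Proof.
fix IH 1; case=> ts /=; congr RNode.
elim: ts => [|t ts IHts] //=; by rewrite IH IHts.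
Qed.

Lemma rt_encK : cancel rt_enc rt_dec.
Proof. exact: rt_encK_aux. Qed.

HB.instance Definition _ := Countable.copy rtree (can_type rt_encK).

(* a fixed total order on planar trees, used only to pick canonical representatives *)
Definition rt_le (a b : rtree) : bool := (pickle a <= pickle b)%N.

(* canonical representative of the isomorphism class of a tree: children
   recursively canonicalised and sorted *)
Fixpoint canonT (t : rtree) : rtree :=
  let: RNode ts := t in RNode (sort rt_le (map canonT ts)).

(* forests = finite multisets of trees; canonical form of a forest *)
Definition forest := seq rtree.
Definition canonF (f : forest) : forest := sort rt_le (map canonT f).

(* An element of H_CK is represented by a finite formal sum  sum_i c_i f_i
   (list of pairs (c_i, f_i)); the empty forest [::] is the unit 1.
   Two representatives denote the same element iff all coefficients agree,
   where forests are compared up to isomorphism. *)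
Definition hck (K : fieldType) := seq (K * forest).

Section HCK.
Variable K : fieldType.

Definition hcoef (h : hck K) (f : forest) : K :=
  \sum_(p <- h | canonF p.2 == canonF f) p.1.

Definition heq (h g : hck K) : Prop := forall f, hcoef h f = hcoef g f.

Definition hzero : hck K := [::].
Definition hadd (h g : hck K) : hck K := h ++ g.
Definition hopp (h : hck K) : hck K := [seq (- p.1, p.2) | p <- h].
Definition hmul (h g : hck K) : hck K :=
  [seq (p.1 * q.1, p.2 ++ q.2) | p <- h, q <- g].
Definition hforest (f : forest) : hck K := [:: (1, f)].
Definition hBplus (h : hck K) : hck K := [seq (p.1, [:: RNode p.2]) | p <- h].
End HCK.

Definition tcirc (a b : rtree) : rtree :=
  let: RNode as_ := a in RNode (rcons as_ b).
Definition ttimes (a b : rtree) : rtree :=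
  let: RNode as_ := a in let: RNode bs := b in RNode (as_ ++ bs).

Definition bowtie_rel (K : fieldType) (a b : rtree) : hck K :=
  [:: (1, [:: tcirc a b]); (1, [:: tcirc b a]); (1, [:: ttimes a b]);
      (-1, [:: a; b])].

Section QSh.
Variable K : fieldType.

Fixpoint qsh_mon (i : nat) : nat -> {poly K} :=
  match i with
  | 0 => fun j => 'X ^+ j
  | i'.+1 => fix qm (j : nat) : {poly K} :=
      match j with
      | 0 => 'X ^+ i'.+1
      | j'.+1 => (qsh_mon i' j'.+1 + qm j' + qsh_mon i' j') * 'X
      end
  end.

Definition qsh (p q : {poly K}) : {poly K} :=
  \sum_(i < size p) \sum_(j < size q) (p`_i * q`_j) *: qsh_mon i j.

Fixpoint lamT (t : rtree) : {poly K} :=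
  let: RNode ts := t in foldr qsh 1 (map lamT ts) * 'X.

Definition lamF (f : forest) : {poly K} := foldr qsh 1 (map lamT f).

Definition Lambda (h : hck K) : {poly K} := \sum_(p <- h) p.1 *: lamF p.2.
End QSh.

Definition is_hck_ideal (K : fieldType) (J : hck K -> Prop) : Prop :=
  [/\ forall h g, J h -> heq h g -> J g,
      J (hzero K),
      forall h g, J h -> J g -> J (hadd h g),
      forall h, J h -> J (hopp h) &
      forall h g, J h -> J (hmul g h)].

Definition Bplus_stable (K : fieldType) (J : hck K -> Prop) : Prop :=
  forall h, J h -> J (hBplus h).

Definition contains_bowtie_rels (K : fieldType) (J : hck K -> Prop) : Prop :=
  forall a b : rtree, J (bowtie_rel K a b).

Definition in_min_ideal (K : fieldType) (h : hck K) : Prop :=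
  forall J : hck K -> Prop,
    is_hck_ideal J -> Bplus_stable J -> contains_bowtie_rels J -> J h.

Set Warnings "-notation-overridden,-ambiguous-paths,-deprecated".
From HB Require Import structures.
From mathcomp Require Import all_boot all_order all_algebra.
Set Implicit Arguments. Unset Strict Implicit. Unset Printing Implicit Defensive.
Import GRing.Theory.
Local Open Scope ring_scope.

(* The binomial transform  ev p m = \sum_i p_i C(m, i)  is an injective
   linear map from k[x] to sequences N -> k which turns the quasi-shuffle
   product ⋄ into the pointwise product and multiplication by x into partial
   summation  (S u)(m) = \sum_(j < m) u j.  Through it, Lambda becomes the
   morphism sending a forest to the product of its tree values, a tree
   B_+(f) being sent to the partial sums of the value of f.

   1. Kernel ⊇ ideal: ker Lambda is an ideal, is B_+-stable, and contains
      a ⋈ b - ab, because  S u * S v = S (u * S v + v * S u + u * v).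
   2. Kernel ⊆ ideal: modulo any such ideal M, every forest reduces to a
      combination of ladders (induction on the number of vertices, then on the
      number of trees: a single tree is B_+ of a smaller forest, two trees are
      rewritten with a ⋈ b = ab).  Ladders are sent to the monomials x^n, so a
      ladder combination in the kernel vanishes, which concludes. *)

(* The binomial transform of k[x] and its multiplicativity *)
Section BinomialTransform.
Variable K : fieldType.
Implicit Types p q : {poly K}.

(* ev p m is the value at m of the Newton series \sum_i p_i binom(x, i) *)
Definition ev p (m : nat) : K := \sum_(i < m.+1) p`_i * ('C(m, i))%:R.

Lemma sum_ord_extend (F : nat -> K) n1 n2 : (n1 <= n2)%N ->
  (forall i, (n1 <= i < n2)%N -> F i = 0) ->
  \sum_(i < n1) F i = \sum_(i < n2) F i.
Proof.
move=> le12 F0; rewrite (big_ord_widen n2 F le12) big_mkcond /=.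
apply: eq_bigr => i _; case: ifP => // /negbT; rewrite -leqNgt => le1i.
by rewrite F0 // le1i ltn_ord.
Qed.

(* The range of the sum defining ev may be cut at size p; this form makes the
   bilinear definition of the quasi-shuffle product directly usable. *)
Lemma ev_size p m : ev p m = \sum_(i < size p) p`_i * ('C(m, i))%:R.
Proof.
pose F i := p`_i * ('C(m, i))%:R; pose N := (m.+1 + size p)%N.
rewrite /ev (@sum_ord_extend F m.+1 N) ?leq_addr // => [|i /andP[mi _]].
  rewrite (@sum_ord_extend F (size p) N) ?leq_addl // => i /andP[pi _].
  by rewrite /F nth_default ?mul0r.
by rewrite /F bin_small ?mulr0.
Qed.

Lemma evD p q m : ev (p + q) m = ev p m + ev q m.
Proof. by rewrite /ev -big_split; apply: eq_bigr => i _; rewrite coefD mulrDl. Qed.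

Lemma evZ c p m : ev (c *: p) m = c * ev p m.
Proof. by rewrite /ev mulr_sumr; apply: eq_bigr => i _; rewrite coefZ mulrA. Qed.

Lemma ev_sum (I : Type) (r : seq I) (F : I -> {poly K}) m :
  ev (\sum_(i <- r) F i) m = \sum_(i <- r) ev (F i) m.
Proof.
elim: r => [|x r IH]; last by rewrite !big_cons evD IH.
by rewrite !big_nil /ev big1 // => i _; rewrite coef0 mul0r.
Qed.

Lemma ev1 m : ev 1 m = 1.
Proof.
rewrite /ev big_ord_recl coef1 bin0 mulr1 big1 ?addr0 // => i _.
by rewrite coef1 mul0r.
Qed.

(* Multiplication by x is one step of partial summation (Pascal's rule). *)
Lemma evMXS q m : ev (q * 'X) m.+1 = ev (q * 'X) m + ev q m.
Proof.
rewrite /ev big_ord_recl coefMX mul0r add0r.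
rewrite [X in X + _]big_ord_recl coefMX mul0r add0r.
under eq_bigr => i _ do rewrite coefMX /= binS natrD mulrDr.
rewrite big_split /=; congr (_ + _).
rewrite big_ord_recr /= bin_small // mulr0 addr0.
by apply: eq_bigr => i _; rewrite coefMX.
Qed.

Lemma evMX q m : ev (q * 'X) m = \sum_(j < m) ev q j.
Proof.
elim: m => [|m IH]; last by rewrite evMXS IH big_ord_recr.
by rewrite /ev big_ord1 coefMX mul0r big_ord0.
Qed.

Lemma evXn j m : ev 'X^j m = ('C(m, j))%:R.
Proof.
elim: j m => [|j IHj] m; first by rewrite expr0 ev1 bin0.
rewrite exprSr; elim: m => [|m IHm]; first by rewrite evMX big_ord0 bin0n.
by rewrite evMXS IHm IHj binS natrD.
Qed.

(* ev is injective: the matrix (C(m, i)) is unitriangular. *)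
Lemma ev_inj p : (forall m, ev p m = 0) -> p = 0.
Proof.
move=> p0; apply/polyP => k; rewrite coef0.
elim: k {-2}k (leqnn k) => [|n IH] k lekn.
  by move: lekn (p0 0%N); rewrite leqn0 => /eqP ->; rewrite /ev big_ord1 bin0 mulr1.
have := p0 k; rewrite /ev big_ord_recr /= binn mulr1 big1 ?add0r // => i _.
by rewrite IH ?mul0r // -ltnS (leq_trans (ltn_ord i) lekn).
Qed.

Lemma ev_eq p q : (forall m, ev p m = ev q m) -> p = q.
Proof.
move=> epq; apply/eqP; rewrite -subr_eq0; apply/eqP; apply: ev_inj => m.
by rewrite evD -scaleN1r evZ epq mulN1r subrr.
Qed.

Lemma ev_qsh_mon i j m : ev (qsh_mon K i j) m = ('C(m, i) * 'C(m, j))%:R.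
Proof.
elim: i j m => [|i IHi] j m; first by rewrite /= evXn bin0 mul1n.
elim: j m => [|j IHj] m; first by rewrite /= evXn bin0 muln1.
have -> : qsh_mon K i.+1 j.+1 =
    (qsh_mon K i j.+1 + qsh_mon K i.+1 j + qsh_mon K i j) * 'X by [].
elim: m => [|m IHm]; first by rewrite evMX big_ord0 bin0n.
rewrite evMXS IHm !evD IHi IHj IHi -!natrD !binS !mulnDl !mulnDr.
by congr _%:R; rewrite !addnA (addnAC _ ('C(m, i) * 'C(m, j.+1))).
Qed.

Lemma ev_qsh p q m : ev (qsh p q) m = ev p m * ev q m.
Proof.
rewrite /qsh ev_sum !ev_size mulr_suml; apply: eq_bigr => i _.
rewrite ev_sum mulr_sumr; apply: eq_bigr => j _.
by rewrite evZ ev_qsh_mon natrM mulrACA.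
Qed.

Lemma qsh0r p : qsh p 0 = 0.
Proof. by rewrite /qsh size_poly0 big1 // => i _; rewrite big_ord0. Qed.

End BinomialTransform.

(* Lambda through the binomial transform *)
Section LambdaValues.
Variable K : fieldType.
Implicit Types h g : hck K.

Definition evF (f : forest) m : K := \prod_(t <- f) ev (lamT K t) m.

Lemma ev_lamF f m : ev (lamF K f) m = evF f m.
Proof.
rewrite /evF; elim: f => [|t f IH]; first by rewrite big_nil ev1.
by rewrite big_cons -IH /lamF /= ev_qsh.
Qed.

Lemma ev_node ts m : ev (lamT K (RNode ts)) m = \sum_(j < m) evF ts j.
Proof. by rewrite [lamT _ _]/= evMX; apply: eq_bigr => j _; rewrite ev_lamF. Qed.

Lemma evF1 t m : evF [:: t] m = ev (lamT K t) m.
Proof. by rewrite /evF big_seq1. Qed.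

Lemma evF_cat f1 f2 m : evF (f1 ++ f2) m = evF f1 m * evF f2 m.
Proof. by rewrite /evF big_cat. Qed.

Lemma ev_Lambda h m : ev (Lambda h) m = \sum_(p <- h) p.1 * evF p.2 m.
Proof. by rewrite /Lambda ev_sum; apply: eq_bigr => p _; rewrite evZ ev_lamF. Qed.

Lemma lamF_perm (f g : forest) : perm_eq f g -> lamF K f = lamF K g.
Proof. by move=> pfg; apply: ev_eq => m; rewrite !ev_lamF /evF (perm_big _ pfg). Qed.

Lemma lamT_canon : forall t, lamT K (canonT t) = lamT K t.
Proof.
fix IH 1; case=> ts; change (lamF K (sort rt_le (map canonT ts)) * 'X = lamF K ts * 'X).
rewrite (lamF_perm (permEl (perm_sort _ _))) /lamF; congr (foldr _ _ _ * _).
by elim: ts => [|t ts IHts] //=; rewrite IH IHts.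
Qed.

Lemma lamF_canon f : lamF K (canonF f) = lamF K f.
Proof.
rewrite /canonF (lamF_perm (permEl (perm_sort _ _))) /lamF; congr (foldr _ _ _).
by elim: f => [|t f IHf] //=; rewrite lamT_canon IHf.
Qed.

Lemma sum_group (I T : eqType) (r : seq I) (key : I -> T) (keys : seq T)
    (c : I -> K) (W : T -> {poly K}) :
  uniq keys -> {in r, forall i, key i \in keys} ->
  \sum_(i <- r) c i *: W (key i) =
  \sum_(k <- keys) (\sum_(i <- r | key i == k) c i) *: W k.
Proof.
move=> ukeys keysP.
under [RHS]eq_bigr => k _ do rewrite scaler_suml.
rewrite [RHS](exchange_big_dep xpredT) //=; apply: eq_big_seq => i ri.
rewrite -big_filter (@eq_filter _ _ (pred1 (key i))) => [|k]; last exact: eq_sym.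
by rewrite filter_pred1_uniq ?keysP // big_seq1.
Qed.

Lemma Lambda_heq h g : heq h g -> Lambda h = Lambda g.
Proof.
move=> hg; pose keys := undup [seq canonF p.2 | p <- h ++ g].
have grouped h0 : {in h0, forall p, canonF p.2 \in keys} ->
    Lambda h0 = \sum_(k <- keys) (\sum_(p <- h0 | canonF p.2 == k) p.1) *: lamF K k.
  move=> keysP; rewrite /Lambda; under eq_bigr => p _ do rewrite -lamF_canon.
  exact: (sum_group (fun p : K * forest => p.1) (lamF K) (undup_uniq _) keysP).
have inkeys p : p \in h ++ g -> canonF p.2 \in keys.
  by move=> hp; rewrite mem_undup; apply/mapP; exists p.
rewrite !grouped => [|p hp|p hp]; try by apply: inkeys; rewrite mem_cat hp ?orbT.
apply: eq_big_seq => k; rewrite mem_undup => /mapP[p0 _ ->].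
by have := hg p0.2; rewrite /hcoef => ->.
Qed.

Lemma Lambda_add h g : Lambda (hadd h g) = Lambda h + Lambda g.
Proof. by rewrite /Lambda big_cat. Qed.

Lemma Lambda_opp h : Lambda (hopp h) = - Lambda h.
Proof. by rewrite /Lambda big_map -sumrN; apply: eq_bigr => p _; rewrite scaleNr. Qed.

Lemma Lambda_mul g h : Lambda (hmul g h) = qsh (Lambda g) (Lambda h).
Proof.
apply: ev_eq => m; rewrite ev_qsh !ev_Lambda big_allpairs_dep mulr_suml.
apply: eq_bigr => p _; rewrite mulr_sumr; apply: eq_bigr => q _.
by rewrite evF_cat mulrACA.
Qed.

Lemma Lambda_Bplus h : Lambda (hBplus h) = Lambda h * 'X.
Proof.
apply: ev_eq => m; rewrite evMX ev_Lambda big_map.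
under eq_bigr => p _ do rewrite /= evF1 ev_node mulr_sumr.
by rewrite exchange_big; apply: eq_bigr => j _; rewrite ev_Lambda.
Qed.

(* Product of two partial sums: the identity behind a ⋈ b = ab. *)
Lemma mul_partial_sums (a b : nat -> K) m :
  (\sum_(j < m) a j) * (\sum_(j < m) b j) =
  \sum_(j < m) (a j * \sum_(i < j) b i + b j * \sum_(i < j) a i + a j * b j).
Proof.
elim: m => [|m IH]; first by rewrite !big_ord0 mul0r.
rewrite !big_ord_recr /= -IH mulrDl !mulrDr -!addrA; congr (_ + _).
by rewrite addrCA [_ * b m]mulrC addrA.
Qed.

Lemma Lambda_bowtie a b : Lambda (bowtie_rel K a b) = 0.
Proof.
apply: ev_inj => m; case: a => A; case: b => B.
rewrite ev_Lambda /bowtie_rel !big_cons big_nil /= !evF1 !ev_node.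
rewrite (evF_cat [:: _]) !evF1 !mul1r mulN1r addr0 !ev_node mul_partial_sums.
rewrite !big_split /=.
under eq_bigr => j _ do rewrite -cats1 evF_cat evF1 ev_node.
under [X in _ + (X + _)]eq_bigr => j _ do rewrite -cats1 evF_cat evF1 ev_node.
under [X in _ + (_ + (X + _))]eq_bigr => j _ do rewrite evF_cat.
by rewrite !addrA subrr.
Qed.

End LambdaValues.

Lemma min_ideal_sub_ker (K : fieldType) (h : hck K) : in_min_ideal h -> Lambda h = 0.
Proof.
move=> minh; apply: (minh (fun h0 => Lambda h0 = 0)); first split.
- by move=> h0 g0 L0 hg; rewrite -(Lambda_heq hg).
- by rewrite /Lambda big_nil.
- by move=> h0 g0 L1 L2; rewrite Lambda_add L1 L2 addr0.
- by move=> h0 L0; rewrite Lambda_opp L0 oppr0.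
- by move=> h0 g0 L0; rewrite Lambda_mul L0 qsh0r.
- by move=> h0 L0; rewrite Lambda_Bplus L0 mul0r.
- by move=> a b; rewrite Lambda_bowtie.
Qed.

Section HEquality.
Variable K : fieldType.
Implicit Types h g k : hck K.

Lemma hcoef_add h g f : hcoef (hadd h g) f = hcoef h f + hcoef g f.
Proof. by rewrite /hcoef /hadd big_cat. Qed.

Lemma hcoef_opp h f : hcoef (hopp h) f = - hcoef h f.
Proof. by rewrite /hcoef /hopp big_map sumrN. Qed.

Lemma hcoef_zero f : hcoef (hzero K) f = 0.
Proof. by rewrite /hcoef big_nil. Qed.

Lemma hcoef_mul k h f : hcoef (hmul k h) f =
  \sum_(p <- k) \sum_(q <- h) (if canonF (p.2 ++ q.2) == canonF f then p.1 * q.1 else 0).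
Proof. by rewrite /hcoef big_mkcond big_allpairs_dep. Qed.

Lemma heq_cons c (f f' : forest) h h' : canonF f = canonF f' -> heq h h' ->
  heq ((c, f) :: h) ((c, f') :: h').
Proof. by move=> ef hh' g; rewrite /hcoef !big_cons /= ef; have := hh' g; rewrite /hcoef => ->. Qed.

Lemma heq_perm h h' : perm_eq h h' -> heq h h'.
Proof. by move=> ph g; rewrite /hcoef (perm_big _ ph). Qed.

Lemma canonF_perm (f g : forest) : perm_eq f g -> canonF f = canonF g.
Proof.
move=> pfg; rewrite /canonF; apply/perm_sortP; last exact: perm_map.
- by move=> x y; exact: leq_total.
- by move=> y x z; exact: leq_trans.
- by move=> x y /anti_leq /(pcan_inj pickleK).
Qed.

End HEquality.

Section Congruence.
Variable K : fieldType.
Variable M : hck K -> Prop.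
Hypothesis idealM : is_hck_ideal M.
Implicit Types h g k : hck K.

Definition cong h g := M (hadd h (hopp g)).

Lemma M_heq h g : M h -> heq h g -> M g.
Proof. by case: idealM => H _ _ _ _; apply: H. Qed.

Lemma M_zero : M (hzero K).
Proof. by case: idealM. Qed.

Lemma M_add h g : M h -> M g -> M (hadd h g).
Proof. by case: idealM => _ _ H _ _; apply: H. Qed.

Lemma M_opp h : M h -> M (hopp h).
Proof. by case: idealM => _ _ _ H _; apply: H. Qed.

Lemma M_mul g h : M h -> M (hmul g h).
Proof. by case: idealM => _ _ _ _ H; apply: H. Qed.

Lemma cong_heql h h' g : heq h h' -> cong h g -> cong h' g.
Proof. by move=> hh' C; apply: (M_heq C) => f; rewrite !hcoef_add !hcoef_opp hh'. Qed.

Lemma cong_refl h : cong h h.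
Proof. by apply: (M_heq M_zero) => f; rewrite hcoef_add hcoef_opp hcoef_zero subrr. Qed.

Lemma cong_trans h g k : cong h g -> cong g k -> cong h k.
Proof.
move=> C1 C2; apply: (M_heq (M_add C1 C2)) => f.
by rewrite !hcoef_add !hcoef_opp addrA subrK.
Qed.

Lemma cong_add h g h' g' : cong h g -> cong h' g' -> cong (hadd h h') (hadd g g').
Proof.
move=> C1 C2; apply: (M_heq (M_add C1 C2)) => f.
by rewrite !hcoef_add !hcoef_opp !hcoef_add opprD addrACA.
Qed.

Lemma cong_mul k h g : cong h g -> cong (hmul k h) (hmul k g).
Proof.
move=> C; apply: (M_heq (M_mul k C)) => f.
rewrite hcoef_add hcoef_opp !hcoef_mul -sumrN -big_split /=.
apply: eq_bigr => p _; rewrite /hadd /hopp big_cat big_map -sumrN /=; congr (_ + _).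
by apply: eq_bigr => q _; case: ifP; rewrite ?mulrN ?oppr0.
Qed.

Lemma cong_Bplus h g : Bplus_stable M -> cong h g -> cong (hBplus h) (hBplus g).
Proof.
move=> stableM C; have := stableM _ C.
by rewrite /cong /hBplus /hadd /hopp map_cat -!map_comp.
Qed.

Lemma cong_M h g : cong h g -> M g -> M h.
Proof.
move=> C Mg; apply: (M_heq (M_add C Mg)) => f.
by rewrite !hcoef_add hcoef_opp subrK.
Qed.

End Congruence.

Fixpoint ladder n : forest := if n is n'.+1 then [:: RNode (ladder n')] else [::].

Fixpoint tsize (t : rtree) : nat := let: RNode ts := t in (sumn (map tsize ts)).+1.
Definition weight (f : forest) : nat := sumn (map tsize f).

Lemma weight_ladder n : weight (ladder n) = n.
Proof. by elim: n => //= n; rewrite /weight /= => ->; rewrite addn0. Qed.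

Lemma canonF_ladder n : canonF (ladder n) = ladder n.
Proof.
elim: n => //= n IH; rewrite /canonF /= sorted_sort //; last by move=> y x z; exact: leq_trans.
by rewrite -/(canonF (ladder n)) IH.
Qed.

(* a∘b has the vertices of a and b, a×b one vertex less (the merged roots) *)
Lemma weight_circ a b (R : forest) : weight (tcirc a b :: R) = weight (a :: b :: R).
Proof. by case: a => A; rewrite /weight /= map_rcons sumn_rcons !addSn !addnA. Qed.

Lemma weight_times a b (R : forest) : (weight (ttimes a b :: R) < weight (a :: b :: R))%N.
Proof.
case: a => A; case: b => B; rewrite /weight /= map_cat sumn_cat.
by rewrite !addSn !addnS !addnA ltnS ltnSn.
Qed.

Section LadderCombinations.
Variable K : fieldType.
Implicit Types r : hck K.

Lemma lamF_ladder n : lamF K (ladder n) = 'X^n.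
Proof.
elim: n => [|n IH] //; apply: ev_eq => m.
by rewrite ev_lamF evF1 exprSr -IH.
Qed.

Definition ladder_comb r := forall p, p \in r -> p.2 = ladder (weight p.2).

(* Ladders are sent to distinct monomials: a ladder combination in the kernel
   is zero in H_CK. *)
Lemma ladder_comb_ker r : ladder_comb r -> Lambda r = 0 -> heq r (hzero K).
Proof.
move=> lr L0.
have coef_weight k : \sum_(p <- r | weight p.2 == k) p.1 = 0.
  have := congr1 (fun q : {poly K} => q`_k) L0; rewrite /= coef0 /Lambda coef_sum.
  move=> coefk; rewrite big_mkcond -[RHS]coefk; apply: eq_big_seq => p /lr {2}->.
  by rewrite lamF_ladder coefZ coefXn eq_sym; case: eqP; rewrite ?mulr1 ?mulr0.
move=> f; rewrite hcoef_zero /hcoef.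
have [/hasP[p0 hp0 /eqP<-]|nh] := boolP (has (fun p : K * forest => canonF p.2 == canonF f) r);
  last by rewrite big_hasC.
rewrite -big_filter (@eq_in_filter _ _ (fun p : K * forest => weight p.2 == weight p0.2)).
  by rewrite big_filter coef_weight.
move=> p hp /=; rewrite (lr p hp) (lr p0 hp0) !canonF_ladder !weight_ladder.
by apply/eqP/eqP => [/(congr1 weight)|->]; rewrite ?weight_ladder.
Qed.

Lemma ladder_comb_Bplus r : ladder_comb r -> ladder_comb (hBplus r).
Proof.
move=> lr p /mapP[q hq ->] /=; rewrite (lr q hq) /weight /= addn0.
by rewrite -/(weight (ladder _)) weight_ladder.
Qed.

Lemma ladder_comb_add r1 r2 : ladder_comb r1 -> ladder_comb r2 -> ladder_comb (hadd r1 r2).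
Proof. by move=> l1 l2 p; rewrite mem_cat => /orP[]; [apply: l1 | apply: l2]. Qed.

End LadderCombinations.

(* Reduction to ladders modulo a B_+-stable ideal containing the relations *)
Section Reduction.
Variable K : fieldType.
Variable M : hck K -> Prop.
Hypothesis idealM : is_hck_ideal M.
Hypothesis stableM : Bplus_stable M.
Hypothesis relsM : contains_bowtie_rels M.

Definition reducible (f : forest) :=
  exists2 r, ladder_comb r & cong M (hforest K f) r.

Lemma reducible_nil : reducible [::].
Proof.
exists (hforest K [::]); last exact: cong_refl.
by move=> p; rewrite mem_seq1 => /eqP ->.
Qed.

Lemma reducible_node ts : reducible ts -> reducible [:: RNode ts].
Proof.
case=> r lr C; exists (hBplus r); first exact: ladder_comb_Bplus.
exact: cong_Bplus C.
Qed.

(* a b R ≡ (a∘b) R + (b∘a) R + (a×b) R, the relation multiplied by R *)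
Lemma cong_bowtie a b (R : forest) :
  cong M (hforest K (a :: b :: R))
    (hadd (hforest K (tcirc a b :: R))
      (hadd (hforest K (tcirc b a :: R)) (hforest K (ttimes a b :: R)))).
Proof.
apply: (M_heq idealM (M_opp idealM (M_mul idealM (hforest K R) (relsM a b)))).
have perm1 x : canonF (R ++ [:: x]) = canonF (x :: R) by apply: canonF_perm; rewrite perm_catC.
have perm2 : canonF (R ++ [:: a; b]) = canonF (a :: b :: R) by apply: canonF_perm; rewrite perm_catC.
have reorder : heq [:: (-1, tcirc a b :: R); (-1, tcirc b a :: R);
    (-1, ttimes a b :: R); (1, a :: b :: R)]
  (hadd (hforest K (a :: b :: R)) (hopp (hadd (hforest K (tcirc a b :: R))
      (hadd (hforest K (tcirc b a :: R)) (hforest K (ttimes a b :: R)))))).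
  by apply: heq_perm; rewrite /hadd /hopp /hforest /= perm_sym -perm_rcons.
move=> f; rewrite /cong -reorder; move: f.
rewrite /hopp /hmul /bowtie_rel /hforest /= !mulr1 mul1r opprK.
by do 3 apply: heq_cons => //; apply: heq_cons.
Qed.

Lemma reducible_bowtie a b R :
  reducible (tcirc a b :: R) -> reducible (tcirc b a :: R) ->
  reducible (ttimes a b :: R) -> reducible (a :: b :: R).
Proof.
case=> [r1 l1 C1] [r2 l2 C2] [r3 l3 C3].
exists (hadd r1 (hadd r2 r3)); first by apply: ladder_comb_add => //; apply: ladder_comb_add.
apply: (cong_trans idealM (cong_bowtie a b R)).
by apply: (cong_add idealM C1); apply: (cong_add idealM C2).
Qed.

(* Induction on the number of vertices, then on the number of trees. *)
Lemma reducible_forest f : reducible f.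
Proof.
move: {2}(weight f) (leqnn (weight f)) => n; elim: n f => [|n IHn] f.
  by case: f => [|[ts] f] // _; exact: reducible_nil.
move: {2}(size f) (leqnn (size f)) => s; elim: s f => [|s IHs] f.
  by case: f => // _ _; exact: reducible_nil.
case: f => [|t [|t' R]] sf wf; first exact: reducible_nil.
  case: t {sf} wf => ts; rewrite /weight /= addn0 ltnS => wts.
  exact/reducible_node/IHn.
apply: reducible_bowtie; apply: IHs => //; first by rewrite weight_circ.
  by rewrite weight_circ /weight /= addnCA.
exact: leq_trans (ltnW (weight_times _ _ _)) wf.
Qed.

Lemma reducible_all h : exists2 r, ladder_comb r & cong M h r.
Proof.
elim: h => [|[c f] h [r2 l2 C2]]; first by exists [::] => //; exact: (M_zero idealM).
have [r1 l1 C1] := reducible_forest f.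
exists (hadd (hmul [:: (c, [::])] r1) r2).
  apply: ladder_comb_add => // p /allpairsP[[x q] [/= + hq ->]].
  by rewrite mem_seq1 => /eqP-> /=; apply: l1.
apply: (cong_add idealM (h := [:: (c, f)])) => //.
apply: (cong_heql idealM _ (cong_mul idealM [:: (c, [::])] C1)).
by rewrite /hmul /hforest /= mulr1; apply: heq_cons.
Qed.

End Reduction.

Lemma min_ideal_is_ideal (K : fieldType) : is_hck_ideal (@in_min_ideal K).
Proof.
split=> [h g Hh hg|J []|h g Hh Hg|h Hh|h g Hh] // J idJ stJ relJ; case: (idJ).
- by move=> H _ _ _ _; apply: H (Hh J idJ stJ relJ) hg.
- by move=> _ _ H _ _; apply: H (Hh J idJ stJ relJ) (Hg J idJ stJ relJ).
- by move=> _ _ _ H _; apply: H (Hh J idJ stJ relJ).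
- by move=> _ _ _ _ H; apply: H (Hh J idJ stJ relJ).
Qed.

Lemma min_ideal_Bplus_stable (K : fieldType) : Bplus_stable (@in_min_ideal K).
Proof. by move=> h Hh J idJ stJ relJ; apply: stJ (Hh J idJ stJ relJ). Qed.

Lemma min_ideal_rels (K : fieldType) : contains_bowtie_rels (@in_min_ideal K).
Proof. by move=> a b J _ _ relJ; apply: relJ. Qed.

Unset Implicit Arguments.

(* If Lambda h = 0, reduce h to a ladder combination r modulo the smallest
   ideal; then Lambda r = Lambda h = 0, so r = 0 and h lies in the ideal. *)
Theorem mainTheorem14 (K : fieldType) (charK0 : [pchar K] =i pred0) :
  forall h : hck K, Lambda h = 0 <-> in_min_ideal h.
Proof.
move=> h; split=> [L0|]; last exact: min_ideal_sub_ker.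
have idM := @min_ideal_is_ideal K.
have [r lr Chr] := reducible_all idM (@min_ideal_Bplus_stable K) (@min_ideal_rels K) h.
have Lr0 : Lambda r = 0.
  move: (min_ideal_sub_ker Chr); rewrite Lambda_add Lambda_opp L0 add0r.
  by move/eqP; rewrite oppr_eq0 => /eqP.
apply: (cong_M idM Chr); apply: (M_heq idM (M_zero idM)) => f.
by rewrite (ladder_comb_ker lr Lr0).
Qed.
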